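(* Let $w'\in\mathcal{W}^e_n$ and let $(O',E')\to(O,E)$ be one application of the step $(\omega)$ during the computation of $\Omega(w')$. Then $(O',E')$ is obtained from $(O,E)$ by applying one step $(\psi)$.
   Context: Fix a finite totally ordered alphabet $A$. Words are finite sequences over $A$; $-$ is the empty word. $<$ is lexicographic order (a proper prefix is smaller than the word); $\infty$ is a formal symbol with $w<\infty$ for all words $w$. A Lyndon word is a nonempty word strictly smaller than each of its proper nonempty suffixes. Every word has a unique Lyndon factorization $w=\ell_1\cdots\ell_m$ into Lyndon words with $\ell_1\ge\dots\ge\ell_m$, written $\ell_1|\cdots|\ell_m$. Odd/even refer to lengths. For a Lyndon word $\ell$ with $|\ell|\ge2$, its standard factorization is $\ell=rs$ with $s$ the longest proper suffix of $\ell$ that is Lyndon (equivalently the smallest proper nonempty suffix). $\mathcal{W}^e_n$: words of length $n$ whose Lyndon factors are all even except possibly one factor of length one. Iterated standard factorization (ISF) of a Lyndon word $\ell$, $|\ell|\ge2$, with respect to $u$ (a word or $\infty$): the unique factorization $\ell=r_js_js_{j-1}\cdots s_1$, $j\ge1$, such that (a) for every $i\in[j]$, $s_i$ is the smallest proper nonempty suffix of $r_js_j\cdots s_i$; (b) for $i\in[j-1]$, $s_i$ is even and $s_i<u$; (c) $s_j$ is odd or $u\le s_j$. Computation of $\Omega(w')$ for $w'\in\mathcal{W}^e_n$: start with $(O',E')=(-,w')$; if $n$ is odd, remove the unique length-one Lyndon factor from $E'$ and set $O'$ equal to that letter. While $E'$ is nonempty, apply step $(\omega)$: let $O'=o'_1|\cdots|o'_h$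 and $E'=e'_1|\cdots|e'_k$ (with $o'_h=\infty$ if $O'$ is empty). If $o'_h<e'_1$, update to (S') $(O'e'_1,\ e'_2\cdots e'_k)$. Otherwise let $e'_1=r_js_js_{j-1}\cdots s_1$ be the ISF of $e'_1$ with respect to $o'_h$ and update to (P') $(o'_1\cdots o'_{h-1}r_js_jo'_h,\ s_{j-1}\cdots s_1e'_2\cdots e'_k)$ if $o'_h\le s_j$, or to (F') $(O's_jr_j,\ s_{j-1}\cdots s_1e'_2\cdots e'_k)$ if $s_j<o'_h$. When $E'$ is empty, $\Omega(w')=O'$. Step $(\psi)$ on a pair of words $(O,E)$ with $|O|\ge2$: let $O=o_1|\cdots|o_m$ (with $o_{m-1}=\infty$ if $m=1$); $o_m$ is splittable if $|o_m|\ge2$ and its standard factorization $o_m=rs$ satisfies $s<o_{m-1}$. Update to: (S) $(o_1\cdots o_{m-1}r,\ sE)$ if splittable and $r$ odd; (P) $(o_1\cdots o_{m-1}s,\ rE)$ if splittable and $r$ even; (F) $(o_1\cdots o_{m-2},\ o_mo_{m-1}E)$ if not splittable. *)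

From mathcomp Require Import all_boot all_order.
Set Implicit Arguments. Unset Strict Implicit. Unset Printing Implicit Defensive.
Import Order.TTheory.

Section Words.
Variables (d : Order.disp_t) (A : finOrderType d).

Definition word := seq A.

Fixpoint lexlt (u v : word) : bool :=
  match u, v with
  | [::], [::] => false
  | [::], _ :: _ => true
  | _ :: _, [::] => false
  | a :: u', b :: v' => (a < b)%O || ((a == b) && lexlt u' v')
  end.

Definition lexle (u v : word) : bool := (u == v) || lexlt u v.

(* words-or-infinity: None stands for the formal symbol oo (w < oo for all w) *)
Definition wordinf := option word.

Definition lt_wi (w : word) (u : wordinf) : bool :=
  if u is Some v then lexlt w v else true.
Definition wi_lt (u : wordinf) (w : word) : bool :=
  if u is Some v then lexlt v w else false.
Definition wi_le (u : wordinf) (w : word) : bool :=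
  if u is Some v then lexle v w else false.

Definition psufs (w : word) : seq word := [seq drop i w | i <- iota 1 (size w).-1].

Definition lyndon (w : word) : bool := (w != [::]) && all (lexlt w) (psufs w).

Definition lfact (w : word) (ls : seq word) : bool :=
  all lyndon ls && sorted (fun x y => lexle y x) ls && (flatten ls == w).

Definition std_fact (l r s : word) : bool :=
  [&& lyndon l, 1 < size l, l == r ++ s, s \in psufs l, lyndon s &
      all (fun t => lyndon t ==> (size t <= size s)) (psufs l)].

Definition smallest_psuf (w s : word) : bool := (s \in psufs w) && all (lexle s) (psufs w).

(* ISF of l w.r.t. u : l = r s_j s_{j-1} ... s_1, with ss = [:: s_j; ...; s_1] *)
Definition isf (l : word) (u : wordinf) (r : word) (ss : seq word) : bool :=
  [&& lyndon l, 1 < size l, 0 < size ss, l == r ++ flatten ss,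
      (* (a) s_i smallest proper nonempty suffix of r s_j ... s_i *)
      all (fun k => smallest_psuf (r ++ flatten (take k ss)) (nth [::] ss k.-1))
          (iota 1 (size ss)),
      all (fun s => ~~ odd (size s) && lt_wi s u) (behead ss) &
      odd (size (head [::] ss)) || wi_le u (head [::] ss)].

Definition inWe (n : nat) (w : word) : Prop :=
  size w = n /\ exists ls, lfact w ls /\
    (count (fun l => odd (size l)) ls <= 1)%N /\
    all (fun l => odd (size l) ==> (size l == 1%N)) ls.

Definition lastf (os : seq word) : wordinf :=
  if os is [::] then None else Some (last [::] os).

Definition state := (word * word)%type.

Definition omega_init (w : word) (st : state) : Prop :=
  exists ls, lfact w ls /\
    if odd (size w) then
      exists ls1 a ls2, ls = ls1 ++ [:: a] :: ls2 /\ st = ([:: a], flatten (ls1 ++ ls2))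
    else st = ([::], w).

(* one step (omega) : (O', E') -> (O, E) *)
Definition omega_step (st st' : state) : Prop :=
  let: (Ow, Ew) := st in
  exists os e1 es, lfact Ow os /\ lfact Ew (e1 :: es) /\
    let u := lastf os in
    (wi_lt u e1 /\ st' = (Ow ++ e1, flatten es))
    \/ (~~ wi_lt u e1 /\ exists r ss, isf e1 u r ss /\
          let sj := head [::] ss in
          ((exists os1 oh, os = rcons os1 oh /\ lexle oh sj /\
              st' = (flatten os1 ++ r ++ sj ++ oh, flatten (behead ss) ++ flatten es))
           \/ (lt_wi sj u /\
              st' = (Ow ++ sj ++ r, flatten (behead ss) ++ flatten es)))).

(* states reached during the computation of Omega(w) (while E' is nonempty
   the step (omega) applies) *)
Inductive omega_reach (w : word) : state -> Prop :=
  | oreach_init st : omega_init w st -> omega_reach w st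
  | oreach_step st st' : omega_reach w st -> omega_step st st' -> omega_reach w st'.

Definition psi_step (st st' : state) : Prop :=
  let: (Ow, Ew) := st in
  (1 < size Ow)%N /\ exists os1 om, lfact Ow (rcons os1 om) /\
    let om1 := lastf os1 in
    ((exists r s, std_fact om r s /\ lt_wi s om1 /\
        ((odd (size r) /\ st' = (flatten os1 ++ r, s ++ Ew))
         \/ (~~ odd (size r) /\ st' = (flatten os1 ++ s, r ++ Ew))))
     \/ ((~ exists r s, std_fact om r s /\ lt_wi s om1) /\
         exists os2 o, os1 = rcons os2 o /\ st' = (flatten os2, om ++ o ++ Ew))).

End Words.

(* Along the computation of Omega, write O' = o_1|...|o_h and E' = e_1|...|e_k.
   Every e_i is even and, when h > 0, o_h is odd, o_h < o_{h-1}, e_1 < o_{h-1}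
   and e_1 is at most every proper suffix of o_h (with o_0 = oo).  These bounds
   are restored by each step (omega), and they make (psi) undo it: after (S')
   the new last factor o_h e_1 has standard factorization (o_h, e_1) with o_h
   odd, so (S) applies; after (P') the new last factor r_j s_j o_h has standard
   factorization (r_j s_j, o_h) with r_j s_j even, so (P) applies; after (F')
   the new last factor is the odd word r_j, whose proper suffixes are all at
   least s_j (the smallest proper suffix of r_j s_j), so it is not splittable
   and (F) applies. *)

From mathcomp Require Import all_boot all_order.
From Stdlib Require Import Lia.
From mathcomp Require Import zify.
Set Implicit Arguments. Unset Strict Implicit. Unset Printing Implicit Defensive.
Import Order.TTheory.

Section Words.
Variables (d : Order.disp_t) (A : finOrderType d).
Implicit Types p t w x y : word A.

(* Unlike [size_eq0], this keeps [size] at type [word A], where [lia] sees it. *)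
Lemma size_word_gt0 x : (0 < size x) = (x != [::]).
Proof. by case: x. Qed.

Lemma cat_neq0 x y : (x ++ y != [::]) = (x != [::]) || (y != [::]).
Proof. by case: x. Qed.

Lemma size_cat_gt1 w x y : x != [::] -> y != [::] -> 1 < size (w ++ x ++ y).
Proof. by rewrite -!size_word_gt0 !size_cat; lia. Qed.

Lemma catl_neq p t : p != [::] -> p ++ t != t.
Proof.
move=> np; apply/eqP => /(congr1 size)/eqP.
by rewrite size_cat -{2}[size t]add0n eqn_add2r size_eq0 (negbTE np).
Qed.

End Words.

Section Lexicographic.
Variables (d : Order.disp_t) (A : finOrderType d).
Implicit Types t u v w x y : word A.

Lemma lexltE u v : lexlt u v = (u < v :> seqlexi A)%O.
Proof. by elim: u v => [|a u IH] [|b v] //=; rewrite ltxi_cons IH; case: ltgtP. Qed.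

Lemma lexleE u v : lexle u v = (u <= v :> seqlexi A)%O.
Proof. by rewrite /lexle lexltE le_eqVlt. Qed.

Lemma lexle_refl u : lexle u u.
Proof. by rewrite lexleE. Qed.

Lemma lexleNgt u v : lexle u v = ~~ lexlt v u.
Proof. by rewrite lexleE lexltE leNgt. Qed.

Lemma lexlt_neqAle u v : lexlt u v = (u != v) && lexle u v.
Proof. by rewrite lexleE lexltE lt_neqAle. Qed.

Lemma lexltW u v : lexlt u v -> lexle u v.
Proof. by rewrite lexlt_neqAle => /andP[]. Qed.

Lemma lexlt_trans u v w : lexlt u v -> lexlt v w -> lexlt u w.
Proof. by rewrite !lexltE; apply: lt_trans. Qed.

Lemma lexle_trans u v w : lexle u v -> lexle v w -> lexle u w.
Proof. by rewrite !lexleE; apply: le_trans. Qed.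

Lemma lexle_lt_trans u v w : lexle u v -> lexlt v w -> lexlt u w.
Proof. by rewrite lexleE !lexltE; apply: le_lt_trans. Qed.

Lemma lexlt_le_trans u v w : lexlt u v -> lexle v w -> lexlt u w.
Proof. by rewrite lexleE !lexltE; apply: lt_le_trans. Qed.

Lemma lexlt_asym u v : lexlt u v -> lexlt v u = false.
Proof. by move/lexltW; rewrite lexleNgt => /negbTE. Qed.

Lemma lexle_anti u v : lexle u v -> lexle v u -> u = v.
Proof. by rewrite !lexleE => uv vu; apply: (@le_anti _ (seqlexi A)); rewrite uv vu. Qed.

Lemma lexlt_cat2l t x y : lexlt (t ++ x) (t ++ y) = lexlt x y.
Proof. by elim: t => //= a t ->; rewrite ltxx eqxx. Qed.

Lemma lexlt_prefix u v : lexlt u (u ++ v) = (v != [::]).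
Proof. by rewrite -{1}(cats0 u) lexlt_cat2l; case: v. Qed.

Lemma lexle_prefix u v : lexle u (u ++ v).
Proof. by rewrite lexleNgt -{2}(cats0 u) lexlt_cat2l; case: v. Qed.

Lemma lexlt_cases u v : lexlt u v ->
  (exists2 z, z != [::] & v = u ++ z) \/ (forall x y, lexlt (u ++ x) (v ++ y)).
Proof.
elim: u v => [|a u IH] [|b v] //=; first by left; exists (b :: v).
case/orP=> [ab|/andP[/eqP <- /IH[[z nz ->]|uv]]]; last 2 first.
- by left; exists z.
- by right=> x y; rewrite ltxx eqxx uv.
by right=> x y; rewrite ab.
Qed.

Lemma lexle_cases u v : lexle u v ->
  (exists z, v = u ++ z) \/ (forall x y, lexlt (u ++ x) (v ++ y)).
Proof.
case/orP=> [/eqP <-|/lexlt_cases[[z _ ->]|]]; last by right.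
- by left; exists [::]; rewrite cats0.
- by left; exists z.
Qed.

Lemma lexle_cat u v y : lexle u v -> lexle u (v ++ y).
Proof.
case/lexle_cases=> [[z ->]|uv]; first by rewrite -catA lexle_prefix.
by apply: lexltW; have := uv [::] y; rewrite cats0.
Qed.

Lemma lexlt_cat_of_le y v : lexle y v -> v != [::] -> lexlt y (v ++ y).
Proof.
case/lexle_cases=> [[z ->] nv|yv _]; last by have := yv [::] y; rewrite cats0.
by rewrite -catA lexlt_prefix cat_neq0 orbC -cat_neq0.
Qed.

End Lexicographic.

Section ProperSuffixes.
Variables (d : Order.disp_t) (A : finOrderType d).
Implicit Types p s t w x y : word A.

Lemma psufsP t w : reflect (exists2 i, 0 < i < size w & t = drop i w) (t \in psufs w).
Proof.
apply: (iffP mapP) => [[i]|[i hi ->]]; last by exists i; rewrite // mem_iota; lia.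
by rewrite mem_iota => hi ->; exists i => //; lia.
Qed.

Lemma psufs_drop i w : 0 < i < size w -> drop i w \in psufs w.
Proof. by move=> hi; apply/psufsP; exists i. Qed.

Lemma psufs_cat p t : p != [::] -> t != [::] -> t \in psufs (p ++ t).
Proof.
move=> np nt; apply/psufsP; exists (size p); last by rewrite drop_size_cat.
by move: np nt; rewrite size_cat -!size_word_gt0; lia.
Qed.

Lemma psufs_size t w : t \in psufs w -> 0 < size t < size w.
Proof. by case/psufsP=> i hi ->; rewrite size_drop; lia. Qed.

Lemma psufs_catP t w :
  reflect (exists p, [/\ p != [::], t != [::] & w = p ++ t]) (t \in psufs w).
Proof.
apply: (iffP idP) => [/psufsP[i hi ->]|[p [np nt ->]]]; last exact: psufs_cat.
case/andP: hi => i0 iw; exists (take i w).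
by rewrite cat_take_drop -!size_eq0 size_take size_drop iw subn_eq0 -lt0n -ltnNge i0 iw.
Qed.

Lemma psufs_trans s t w : t \in psufs s -> s \in psufs w -> t \in psufs w.
Proof.
case/psufs_catP=> q [nq nt ->] /psufs_catP[p [np _ ->]].
by rewrite catA psufs_cat // cat_neq0 np.
Qed.

Lemma psufs_catr t x y : t \in psufs x -> t ++ y \in psufs (x ++ y).
Proof.
case/psufs_catP=> p [np nt ->]; rewrite -catA psufs_cat //.
by rewrite cat_neq0 nt.
Qed.

End ProperSuffixes.

Section Lyndon.
Variables (d : Order.disp_t) (A : finOrderType d).
Implicit Types a s t w x y : word A.

Lemma lyndonP w : reflect (w != [::] /\ {in psufs w, forall t, lexlt w t}) (lyndon w).
Proof. by apply: (iffP andP) => -[-> /allP]. Qed.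

Lemma lyndon_neq0 w : lyndon w -> w != [::].
Proof. by case/lyndonP. Qed.

Lemma lyndon_lt w t : lyndon w -> t \in psufs w -> lexlt w t.
Proof. by case/lyndonP=> _; apply. Qed.

Lemma lyndon_le_drop w i : lyndon w -> i < size w -> lexle w (drop i w).
Proof.
move=> lw iw; case: (posnP i) => [->|i0]; first by rewrite drop0 lexle_refl.
by apply/lexltW/lyndon_lt/psufs_drop; rewrite // i0 iw.
Qed.

Lemma lyndon_cat x y : lyndon x -> lyndon y -> lexlt x y -> lyndon (x ++ y).
Proof.
move=> lx ly xy; have nx := lyndon_neq0 lx; have ny := lyndon_neq0 ly.
have xy_y : lexlt (x ++ y) y.
  case: (lexlt_cases xy) => [[z nz yE]|]; last by move/(_ y [::]); rewrite cats0.
  by rewrite {2}yE lexlt_cat2l; apply: lyndon_lt; rewrite // yE psufs_cat.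
apply/lyndonP; split; first by rewrite cat_neq0 nx.
move=> t /psufsP[i /andP[i0 ilt] ->]; rewrite drop_cat; case: ifP => ix.
  have /(lyndon_lt lx)/lexlt_cases[[z nz]|] : drop i x \in psufs x; last exact.
    by rewrite psufs_drop // i0 ix.
  move/(congr1 size); rewrite size_drop size_cat; move: nz; rewrite -size_word_gt0; lia.
apply: lexlt_le_trans xy_y (lyndon_le_drop ly _); move: ilt ix; rewrite size_cat; lia.
Qed.

Lemma lyndon_le_of_lt_cat s t : lyndon s -> t != [::] -> lexlt s (t ++ s) -> lexle s t.
Proof.
move=> ls nt h; rewrite lexleNgt; apply/negP => /lexlt_cases[[z nz sE]|ts].
  have sz : lexlt s z by apply: lyndon_lt; rewrite // sE psufs_cat.
  by move: h; rewrite {1}sE lexlt_cat2l (lexlt_asym sz).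
by move: (ts s [::]); rewrite cats0 (lexlt_asym h).
Qed.

Lemma smallest_psuf_lyndon w s : smallest_psuf w s -> lyndon s.
Proof.
case/andP=> sw /allP s_min; apply/lyndonP; split; first by case/psufs_catP: sw => p [].
move=> t ts; rewrite lexlt_neqAle s_min ?(psufs_trans ts sw) // andbT.
by case/psufs_catP: ts => p [np _ ->]; apply: catl_neq.
Qed.

Lemma smallest_psuf_le_psufs x s :
  smallest_psuf (x ++ s) s -> {in psufs x, forall t, lexle s t}.
Proof.
move=> sm t tx; have ls := smallest_psuf_lyndon sm; case/andP: sm => _ /allP s_min.
have nt : t != [::] by case/psufs_catP: tx => ? [].
have le_ts := s_min _ (psufs_catr s tx).
by apply: (lyndon_le_of_lt_cat ls nt); rewrite lexlt_neqAle eq_sym catl_neq.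
Qed.

Lemma lyndon_prefix_smallest_psuf x s :
  lyndon (x ++ s) -> smallest_psuf (x ++ s) s -> lyndon x.
Proof.
move=> lxs /andP[sxs /allP s_min]; apply/lyndonP; split.
  by have := psufs_size sxs; rewrite size_cat -size_word_gt0; lia.
move=> t tx; case/psufs_catP: (tx) => p [np nt xE].
rewrite lexlt_neqAle lexleNgt; apply/andP; split.
  by rewrite xE; apply: catl_neq.
have xs_ts : lexlt (x ++ s) (t ++ s) by apply/(lyndon_lt lxs)/psufs_catr.
apply/negP => /lexlt_cases[[v nv xE']|tx'].
  have vs : v ++ s \in psufs (x ++ s) by rewrite xE' -catA psufs_cat // cat_neq0 nv.
  by move: (s_min _ vs); rewrite lexleNgt -(lexlt_cat2l t) catA -xE' xs_ts.
by move: (tx' s s); rewrite (lexlt_asym xs_ts).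
Qed.

Lemma le_psufs_cat x y : lyndon y -> {in psufs x, forall v, lexle y v} ->
  {in psufs (x ++ y), forall t, lexle y t}.
Proof.
move=> ly y_min t /psufsP[i /andP[i0 ilt] ->]; rewrite drop_cat; case: ifP => ix.
  apply/lexltW/lexlt_cat_of_le; first by rewrite y_min // psufs_drop // i0.
  by rewrite -size_word_gt0 size_drop; lia.
by apply: lyndon_le_drop; move: ilt ix; rewrite size_cat; lia.
Qed.

Lemma std_fact_cat x y : lyndon (x ++ y) -> lyndon y -> x != [::] ->
  {in psufs x, forall v, lexle y v} -> std_fact (x ++ y) x y.
Proof.
move=> lxy ly nx y_min; have ny := lyndon_neq0 ly.
rewrite /std_fact lxy ly eqxx psufs_cat //= size_cat.
apply/andP; split; first by move: nx ny; rewrite -!size_word_gt0; lia.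
apply/allP => t /psufsP[i /andP[i0 _] ->]; apply/implyP.
rewrite drop_cat; case: ifP => ix; last by rewrite size_drop leq_subr.
have dx : drop i x \in psufs x by rewrite psufs_drop // i0 ix.
have nd : drop i x != [::] by case/psufs_catP: dx => ? [].
move=> /lyndon_lt/(_ (psufs_cat nd ny)).
by rewrite (lexlt_asym (lexlt_cat_of_le (y_min _ dx) nd)).
Qed.

Lemma lexlt_cat_lyndon a x y :
  lyndon a -> x != [::] -> lexlt x a -> lexlt y a -> lexlt (x ++ y) a.
Proof.
move=> la nx xa ya; case: (lexlt_cases xa) => [[z nz aE]|]; last first.
  by move/(_ y [::]); rewrite cats0.
rewrite aE lexlt_cat2l; apply: lexlt_trans ya _; apply: lyndon_lt; rewrite // aE.
exact: psufs_cat.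
Qed.

End Lyndon.

Section Factorization.
Variables (d : Order.disp_t) (A : finOrderType d).
Implicit Types (l w x y : word A) (a b ls : seq (word A)).

Definition lexge x y := @lexle d A y x.

Lemma lexge_trans : transitive lexge.
Proof. by move=> y x z xy yz; apply: lexle_trans yz xy. Qed.

Lemma lfactP w ls :
  reflect [/\ all (@lyndon d A) ls, sorted lexge ls & flatten ls = w] (lfact w ls).
Proof.
apply: (iffP idP) => [/andP[/andP[al srt] /eqP fl]|[al srt fl]]; first by split.
by apply/andP; split; [apply/andP | rewrite fl].
Qed.

Lemma lfact_lyndon w ls l : lfact w ls -> l \in ls -> lyndon l.
Proof. by case/lfactP=> /allP al _ _; apply: al. Qed.

Lemma lfact_last_lyndon w ls l : lfact w (rcons ls l) -> lyndon l.
Proof. by move/lfact_lyndon; apply; rewrite mem_rcons mem_head. Qed.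

Lemma lfact_nil ls : lfact [::] ls -> ls = [::].
Proof.
by case/lfactP=> al _; case: ls al => // [[|a l] ls].
Qed.

Lemma lfact_cons w l ls : lfact w (l :: ls) ->
  [/\ lyndon l, lfact (flatten ls) ls, w = l ++ flatten ls & all (lexge l) ls].
Proof.
case/lfactP=> /= /andP[ll al] srt <-; split=> //.
  by apply/lfactP; split=> //; apply: path_sorted srt.
exact: order_path_min lexge_trans srt.
Qed.

Lemma lfact_belast w ls l : lfact w (rcons ls l) -> lfact (flatten ls) ls.
Proof.
case/lfactP; rewrite all_rcons -cats1 => /andP[_ al] /cat_sorted2[srt _] _.
exact/lfactP.
Qed.

Lemma lfact_cat x y a b l : lfact x a -> lfact y b -> path lexge (last l a) b ->
  lfact (x ++ y) (a ++ b).
Proof.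
case/lfactP=> ala sa <- /lfactP[alb sb <-] ab; apply/lfactP.
rewrite all_cat ala alb flatten_cat; split=> //.
by case: a {ala} sa ab => [_ /path_sorted|h a] //= sa ab; rewrite cat_path sa.
Qed.

Lemma lastf_rcons ls l : lastf (rcons ls l) = Some l.
Proof. by case: ls => //= h ls; rewrite last_rcons. Qed.

Lemma lfact_rcons w ls l : lfact w ls -> lyndon l -> lt_wi l (lastf ls) ->
  lfact (w ++ l) (rcons ls l).
Proof.
move=> hw ll hl; rewrite -cats1; apply: (lfact_cat (l := l) hw).
  by apply/lfactP; rewrite /= ll cats0.
case/lastP: ls hw hl => [|ls h] _; first by rewrite /= /lexge lexle_refl.
by rewrite lastf_rcons last_rcons /= andbT => /lexltW.
Qed.

Lemma lt_wi_le x y U : lexle x y -> lt_wi y U -> lt_wi x U.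
Proof. by case: U => //= v; apply: lexle_lt_trans. Qed.

Lemma wi_leNlt x U : wi_le U x -> lt_wi x U = false.
Proof. by case: U => //= v; rewrite lexleNgt => /negbTE. Qed.

Lemma lt_wi_cat w ls x y : lfact w ls -> x != [::] ->
  lt_wi x (lastf ls) -> lt_wi y (lastf ls) -> lt_wi (x ++ y) (lastf ls).
Proof.
case/lastP: ls => [|ls l] // /lfact_last_lyndon ll nx; rewrite lastf_rcons /=.
exact: lexlt_cat_lyndon.
Qed.

Lemma lfact_last_le w ls l i : lfact w (rcons ls l) -> i < size w -> lexle l (drop i w).
Proof.
elim: ls w i => [|x ls IH] w i /=.
  by case/lfactP=> /= /andP[ll _] _; rewrite cats0 => <-; apply: lyndon_le_drop.
case/lfact_cons=> lx hw -> /allP lx_max iw; rewrite drop_cat.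
case: ifP => ix; last by apply: IH hw _; move: iw ix; rewrite size_cat; lia.
apply/lexle_cat/(lexle_trans _ (lyndon_le_drop lx ix)).
by apply: lx_max; rewrite mem_rcons mem_head.
Qed.

(* Each last factor is at most every nonempty suffix of [w], so the two last
   factors coincide. *)
Lemma lfact_uniq w a b : lfact w a -> lfact w b -> a = b.
Proof.
elim/last_ind: a w b => [|a x IH] w b ha hb.
  by case/lfactP: ha => _ _ /= wE; rewrite -wE in hb; rewrite (lfact_nil hb).
case/lastP: b hb => [|b y] hb.
  by case/lfactP: hb ha => _ _ /= <- /lfact_nil; rewrite -cats1; case: (a).
have flattenE c z : lfact w (rcons c z) -> w = flatten c ++ z.
  by case/lfactP=> _ _ <-; rewrite flatten_rcons.
have last_le c z c' z' : lfact w (rcons c z) -> lfact w (rcons c' z') -> lexle z z'.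
  move=> h h'; have nz' := lyndon_neq0 (lfact_last_lyndon h').
  have := lfact_last_le (i := size (flatten c')) h.
  rewrite {2}(flattenE _ _ h') drop_size_cat //.
  by apply; rewrite (flattenE _ _ h') size_cat -[X in X < _]addn0 ltn_add2l size_word_gt0.
have xy := lexle_anti (last_le _ _ _ _ ha hb) (last_le _ _ _ _ hb ha); subst y.
have fab : flatten a = flatten b.
  have sab : size (flatten a) = size (flatten b).
    by apply/eqP; rewrite -(eqn_add2r (size x)) -!size_cat -(flattenE _ _ ha) -flattenE.
  move: (flattenE _ _ ha); rewrite {1}(flattenE _ _ hb) => /eqP.
  by rewrite eqseq_cat // => /andP[/eqP].
congr rcons; apply: (IH (flatten a)); first exact: lfact_belast ha.
by rewrite fab; apply: lfact_belast hb.
Qed.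

End Factorization.
Arguments lexge {d A}.
Arguments lexge_trans {d A}.

Section IteratedStandardFactorization.
Variables (d : Order.disp_t) (A : finOrderType d).
Variables (l : word A) (u : wordinf A) (r : word A) (ss : seq (word A)).
Hypothesis hisf : isf l u r ss.

Let pre k := r ++ flatten (take k ss).

Lemma isf_clauses : [/\ lyndon l, l = r ++ flatten ss,
  all (fun s => ~~ odd (size s) && lt_wi s u) (behead ss) &
  odd (size (head [::] ss)) || wi_le u (head [::] ss)].
Proof. by case/and5P: hisf => ll _ _ /eqP lE /and3P[_ hb hc]. Qed.

Lemma isf_smallest k : k < size ss -> smallest_psuf (pre k.+1) (nth [::] ss k).
Proof.
case/and5P: hisf => _ _ _ _ /andP[/allP small _] hk.
by apply: (small k.+1); rewrite mem_iota; lia.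
Qed.

Lemma isf_preS k : k < size ss -> pre k.+1 = pre k ++ nth [::] ss k.
Proof. by move=> hk; rewrite /pre (take_nth [::] hk) flatten_rcons catA. Qed.

(* Descending induction from [pre (size ss) = l]: [pre k] is the Lyndon word
   [pre k.+1] with its smallest proper suffix removed. *)
Lemma isf_lyndon_pre k : k <= size ss -> lyndon (pre k).
Proof.
have [ll lE _ _] := isf_clauses.
move=> hk; rewrite -(subKn hk); elim: (size ss - k) (leq_subr k (size ss)) => [|m IH] hm.
  by rewrite subn0 /pre take_size -lE.
set j := size ss - m.+1; have hj : j < size ss by rewrite /j; lia.
have := IH (ltnW hm); rewrite -subnSK // -/j isf_preS // => lp.
by apply: lyndon_prefix_smallest_psuf lp _; rewrite -isf_preS //; apply: isf_smallest.
Qed.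

Lemma isf_all_lyndon : all (@lyndon d A) ss.
Proof. by apply/(all_nthP [::]) => i /isf_smallest/smallest_psuf_lyndon. Qed.

Lemma isf_sorted : sorted lexge ss.
Proof.
apply/(sortedP [::]) => i hi; rewrite /lexge.
have ll k : k < size ss -> lyndon (nth [::] ss k) by apply/all_nthP/isf_all_lyndon.
have ni : nth [::] ss i != [::] by apply/lyndon_neq0/ll/ltnW.
have /andP[_ /allP s_min] := isf_smallest hi.
have hmem : nth [::] ss i ++ nth [::] ss i.+1 \in psufs (pre i.+2).
  have np : pre i != [::] by apply/lyndon_neq0/isf_lyndon_pre/ltnW/ltnW.
  by rewrite isf_preS // isf_preS ?(ltnW hi) // -catA psufs_cat // cat_neq0 ni.
apply: (lyndon_le_of_lt_cat (ll _ hi) ni).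
by rewrite lexlt_neqAle eq_sym catl_neq // s_min.
Qed.

End IteratedStandardFactorization.

Section IteratedStandardFactorizationHead.
Variables (d : Order.disp_t) (A : finOrderType d).
Variables (l : word A) (u : wordinf A) (r s : word A) (ss : seq (word A)).
Hypothesis hisf : isf l u r (s :: ss).

Lemma isf_head : [/\ lyndon r, lyndon (r ++ s) & smallest_psuf (r ++ s) s].
Proof.
have l0 := isf_lyndon_pre hisf (leq0n _).
have l1 := isf_lyndon_pre hisf (ltn0Sn _).
have s1 := isf_smallest hisf (ltn0Sn _).
by move: l0 l1 s1; rewrite /= take0 /= !cats0.
Qed.

Lemma isf_lt_last : lexlt l (last s ss).
Proof.
have [ll lE _ _] := isf_clauses hisf.
have /andP[+ _] := isf_smallest hisf (ltnSn (size ss)).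
by rewrite -[(size ss).+1]/(size (s :: ss)) take_size -lE nth_last; apply: lyndon_lt.
Qed.

End IteratedStandardFactorizationHead.

Section Parity.
Variables (d : Order.disp_t) (A : finOrderType d).
Implicit Types ls : seq (word A).

Lemma odd_size_flatten ls : odd (size (flatten ls)) = odd (count (fun l => odd (size l)) ls).
Proof. by elim: ls => //= l ls IH; rewrite size_cat oddD IH; case: (odd (size l)). Qed.

Lemma even_flatten ls : all (fun l => ~~ odd (size l)) ls -> ~~ odd (size (flatten ls)).
Proof. by elim: ls => //= l ls IH /andP[el /IH]; rewrite size_cat oddD (negbTE el). Qed.

End Parity.

Section Omega.
Variables (d : Order.disp_t) (A : finOrderType d).
Implicit Types os es : seq (word A).

(* [ob] is o_h, [lastf os1] is o_{h-1} (or oo) and [e] is e_1. *)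
Definition last_factor_bounds os es : Prop :=
  forall os1 ob, os = rcons os1 ob ->
  [/\ odd (size ob), lt_wi ob (lastf os1) &
      forall e es', es = e :: es' -> lt_wi e (lastf os1) /\ all (lexle e) (psufs ob)].

Definition omega_inv (st : state A) : Prop := exists os es,
  [/\ lfact st.1 os, lfact st.2 es, all (fun e => ~~ odd (size e)) es &
      last_factor_bounds os es].

Section OmegaStepCases.
Variables (O' e1 : word A) (os es : seq (word A)).
Hypotheses (hO : lfact O' os) (le1 : lyndon e1) (hEs : lfact (flatten es) es).
Hypotheses (e1_max : all (lexge e1) es) (ev1 : ~~ odd (size e1)).
Hypotheses (evs : all (fun e => ~~ odd (size e)) es) (hb : last_factor_bounds os (e1 :: es)).

Lemma omega_S_psi : wi_lt (lastf os) e1 ->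
  omega_inv (O' ++ e1, flatten es) /\
  psi_step (O' ++ e1, flatten es) (O', e1 ++ flatten es).
Proof.
case/lastP: os hO hb => [|os1 oh] // hO1 hb1; rewrite lastf_rcons /= => oh_e1.
have [odd_oh oh_lt /(_ e1 es erefl)[e1_lt /allP e1_min]] := hb1 os1 oh erefl.
have loh := lfact_last_lyndon hO1; have noh := lyndon_neq0 loh.
have lx := lyndon_cat loh le1 oh_e1.
have O'E : O' = flatten os1 ++ oh by case/lfactP: hO1 => _ _ <-; rewrite flatten_rcons.
have x_lt : lt_wi (oh ++ e1) (lastf os1).
  exact: lt_wi_cat (lfact_belast hO1) noh oh_lt e1_lt.
have hO' : lfact (O' ++ e1) (rcons os1 (oh ++ e1)).
  by rewrite O'E -catA; apply: lfact_rcons (lfact_belast hO1) lx x_lt.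
split.
- exists (rcons os1 (oh ++ e1)), es; split=> // _ _ /rcons_inj[<- <-]; split=> //.
    by rewrite size_cat oddD odd_oh (negbTE ev1).
  move=> e es' esE; have e_le : lexle e e1 by apply: (allP e1_max); rewrite esE mem_head.
  split; first exact: lt_wi_le e_le e1_lt.
  by apply/allP => t /(le_psufs_cat le1 e1_min); apply: lexle_trans e_le.
- split; first by rewrite O'E -catA size_cat_gt1 // lyndon_neq0.
  exists os1, (oh ++ e1); split=> //; left; exists oh, e1; split; first exact: std_fact_cat.
  by split=> //; left; rewrite O'E.
Qed.

Section ISFCases.
Variables (r sj : word A) (st : seq (word A)).
Hypothesis hisf : isf e1 (lastf os) r (sj :: st).

Lemma lfact_isf_rest : lfact (flatten st ++ flatten es) (st ++ es).
Proof.
have /andP[_ lst] := isf_all_lyndon hisf; have /= srt := isf_sorted hisf.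
apply: (lfact_cat (l := sj)) hEs _; first by apply/lfactP; split=> //; apply: path_sorted srt.
have e1_last : lexge (last sj st) e1 by apply/lexltW/(isf_lt_last hisf).
apply: (path_le lexge_trans e1_last).
by rewrite path_sortedE ?e1_max; [case/lfactP: hEs | apply: lexge_trans].
Qed.

Lemma even_isf_rest : all (fun e => ~~ odd (size e)) (st ++ es).
Proof.
have [_ _ /= tail _] := isf_clauses hisf.
by rewrite all_cat evs andbT; apply: sub_all tail => s /andP[].
Qed.

Lemma even_isf_head : ~~ odd (size (r ++ sj)).
Proof.
have [_ e1E /= tail _] := isf_clauses hisf.
have ev_st : ~~ odd (size (flatten st)).
  by apply: even_flatten; apply: sub_all tail => s /andP[].
by move: ev1; rewrite e1E catA size_cat oddD (negbTE ev_st) addbF.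
Qed.

Lemma isf_rest_head e es' : st ++ es = e :: es' -> e \in st \/ st = [::] /\ lexle e e1.
Proof.
case: st => [|s st'] /=; last by case=> -> _; left; rewrite mem_head.
by move=> esE; right; split=> //; apply: (allP e1_max); rewrite esE mem_head.
Qed.

Lemma omega_P_psi os1 oh : os = rcons os1 oh -> ~~ wi_lt (lastf os) e1 -> lexle oh sj ->
  omega_inv (flatten os1 ++ r ++ sj ++ oh, flatten st ++ flatten es) /\
  psi_step (flatten os1 ++ r ++ sj ++ oh, flatten st ++ flatten es) (O', e1 ++ flatten es).
Proof.
move=> osE; rewrite osE lastf_rcons /= -lexleNgt => e1_oh oh_sj.
have [odd_oh oh_lt _] := hb osE.
have hO1 : lfact O' (rcons os1 oh) by rewrite -osE.
have loh := lfact_last_lyndon hO1; have noh := lyndon_neq0 loh.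
have O'E : O' = flatten os1 ++ oh by case/lfactP: hO1 => _ _ <-; rewrite flatten_rcons.
have [lr lrs /andP[_ /allP sj_min]] := isf_head hisf.
have [_ e1E /= tail _] := isf_clauses hisf.
have e1_lt : lexlt e1 oh.
  by rewrite lexlt_neqAle e1_oh andbT; apply: contraNneq ev1 => ->.
have x_lt : lexlt (r ++ sj) oh by apply: lexle_lt_trans e1_lt; rewrite e1E catA lexle_prefix.
have lx := lyndon_cat lrs loh x_lt.
have x_bound : lt_wi ((r ++ sj) ++ oh) (lastf os1).
  exact: lt_wi_cat (lfact_belast hO1) (lyndon_neq0 lrs) (lt_wi_le (lexltW x_lt) oh_lt) oh_lt.
have hO' : lfact (flatten os1 ++ r ++ sj ++ oh) (rcons os1 ((r ++ sj) ++ oh)).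
  by rewrite (catA r); apply: lfact_rcons (lfact_belast hO1) lx x_bound.
have oh_min : {in psufs (r ++ sj), forall v, lexle oh v}.
  by move=> v /sj_min; apply: lexle_trans oh_sj.
have head_lt e es' : st ++ es = e :: es' -> lexlt e oh.
  case/isf_rest_head => [e_st|[_ e_le]]; last exact: lexle_lt_trans e_le e1_lt.
  by have /andP[_] := allP tail e e_st; rewrite osE lastf_rcons.
split.
- exists (rcons os1 ((r ++ sj) ++ oh)), (st ++ es).
  split=> //; [exact: lfact_isf_rest | exact: even_isf_rest |].
  move=> _ _ /rcons_inj[<- <-]; split=> //.
    by rewrite size_cat oddD odd_oh (negbTE even_isf_head).
  move=> e es' /head_lt/lexltW e_oh; split; first exact: lt_wi_le e_oh oh_lt.
  by apply/allP => t /(le_psufs_cat loh oh_min); apply: lexle_trans e_oh.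
- split; first by rewrite size_cat_gt1 ?cat_neq0 ?noh ?orbT // lyndon_neq0.
  exists os1, ((r ++ sj) ++ oh); split=> //; left; exists (r ++ sj), oh.
  split; first exact: std_fact_cat (lyndon_neq0 lrs) oh_min.
  split=> //; right; split; first exact: even_isf_head.
  by rewrite O'E e1E !catA.
Qed.

Lemma omega_F_psi : lt_wi sj (lastf os) ->
  omega_inv (O' ++ sj ++ r, flatten st ++ flatten es) /\
  psi_step (O' ++ sj ++ r, flatten st ++ flatten es) (O', e1 ++ flatten es).
Proof.
move=> sj_lt.
have [lr lrs sm] := isf_head hisf; have lsj := smallest_psuf_lyndon sm.
have /andP[sj_rsj _] := sm.
have [_ e1E /= tail hc] := isf_clauses hisf.
have odd_sj : odd (size sj) by case/orP: hc => // /wi_leNlt; rewrite sj_lt.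
have odd_r : odd (size r).
  by move: even_isf_head; rewrite size_cat oddD odd_sj addbT negbK.
have rsj_sj := lyndon_lt lrs sj_rsj.
have r_sj : lexlt r sj by apply: lexlt_trans rsj_sj; rewrite lexlt_prefix lyndon_neq0.
have hO' : lfact (O' ++ sj ++ r) (rcons (rcons os sj) r).
  by rewrite catA; apply: lfact_rcons (lfact_rcons hO lsj sj_lt) lr _; rewrite lastf_rcons /=.
have r_min := smallest_psuf_le_psufs sm.
have head_lt e es' : st ++ es = e :: es' -> lexlt e sj.
  case/isf_rest_head => [e_st|[stE e_le]]; last first.
    by apply: lexle_lt_trans e_le _; rewrite e1E stE /= cats0.
  have /andP[ev_e _] := allP tail e e_st.
  rewrite lexlt_neqAle; apply/andP; split; first by apply: contraNneq ev_e => ->.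
  by have /= /(order_path_min lexge_trans)/allP := isf_sorted hisf; apply.
split.
- exists (rcons (rcons os sj) r), (st ++ es).
  split=> //; [exact: lfact_isf_rest | exact: even_isf_rest |].
  move=> _ _ /rcons_inj[<- <-]; rewrite lastf_rcons; split=> //.
  move=> e es' /head_lt e_sj; split=> //.
  by apply/allP => t /r_min; apply: lexle_trans (lexltW e_sj).
- split; first by rewrite size_cat_gt1 // lyndon_neq0.
  exists (rcons os sj), r; split=> //; right; split.
    case=> r' [s' [/and5P[_ _ _ s'_r _]]]; rewrite lastf_rcons /=.
    by rewrite -[lexlt _ _]negbK -lexleNgt r_min.
  exists os, sj; split=> //.
  by case/lfactP: hO => _ _ ->; rewrite e1E !catA.
Qed.

End ISFCases.
End OmegaStepCases.

Lemma omega_step_inv O' E' O E : omega_inv (O', E') -> omega_step (O', E') (O, E) ->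
  omega_inv (O, E) /\ psi_step (O, E) (O', E').
Proof.
case=> os0 [es0 [hO0 hE0 hev hb]] [os [e1 [es [hO [hE step]]]]].
rewrite (lfact_uniq hO0 hO) (lfact_uniq hE0 hE) in hev hb.
have [le1 hEs -> e1_max] := lfact_cons hE; case/andP: hev => ev1 evs.
case: step => [[e1_lt [-> ->]]|[e1_nlt [r [[|sj st] [hisf step]]]]].
- by apply: (omega_S_psi (os := os)).
- by case/and3P: hisf.
case: step => [[os1 [oh [osE [oh_sj [-> ->]]]]]|[sj_lt [-> ->]]].
- by apply: (omega_P_psi (os := os)) e1_nlt oh_sj.
- by apply: (omega_F_psi (os := os)).
Qed.

Lemma omega_init_inv n (w : word A) st :
  inWe n w -> omega_init w st -> omega_inv st.
Proof.
case=> _ [ls [hw [count_odd_le1 _]]] [ls' [hw']]; rewrite (lfact_uniq hw' hw).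
have odd_wE : odd (size w) = odd (count (fun l => odd (size l)) ls).
  by case/lfactP: hw => _ _ <-; rewrite odd_size_flatten.
have evenE ls0 : all (fun l => ~~ odd (size l)) ls0 = (count (fun l => odd (size l)) ls0 == 0).
  by elim: ls0 => //= l ls0 ->; case: (odd (size l)).
case: ifP => w_odd; last first.
  move=> ->; exists [::], ls; split=> //; last by move=> [|? ?] ?.
  by rewrite evenE; move: count_odd_le1 odd_wE; rewrite w_odd; case: (count _ ls) => [|[]].
case=> ls1 [a [ls2 [lsE ->]]]; exists [:: [:: a]], (ls1 ++ ls2); split.
- by apply/lfactP.
- case/lfactP: hw => al srt fl; apply/lfactP; split=> //.
    by move: al; rewrite lsE !all_cat => /and3P[-> _].
  apply: (@subseq_sorted _ lexge lexge_trans _ _ _ srt).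
  by rewrite lsE cat_subseq // subseq_cons.
- by rewrite evenE; move: count_odd_le1; rewrite lsE !count_cat /=; lia.
- by move=> [|? [|? ?]] ? //= [<-].
Qed.

Lemma omega_reach_inv n (w : word A) st : inWe n w -> omega_reach w st -> omega_inv st.
Proof.
move=> hw; elim=> [st0 /(omega_init_inv hw) //|[O' E'] [O E] _ IH].
by case/(omega_step_inv IH).
Qed.

End Omega.

Theorem lemma4p24 (d : Order.disp_t) (A : finOrderType d) (n : nat) (w : seq A)
  (Ow' Ew' Ow Ew : seq A) :
  inWe n w ->
  omega_reach w (Ow', Ew') ->
  omega_step (Ow', Ew') (Ow, Ew) ->
  psi_step (Ow, Ew) (Ow', Ew').
Proof.
move=> hw reach step.
by case: (omega_step_inv (omega_reach_inv hw reach) step).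
Qed.
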